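(* Let $\mathcal X=(\Omega,S)$ be a coherent configuration and let $s$ be a relation of $\mathcal X$ which is connected. Suppose that for every point $\alpha\in\Omega$ the coherent configuration $(\mathcal X_\alpha)_{\alpha s}$ is semiregular. Then for every $(\alpha,\beta)\in s$ with $\alpha\ne\beta$ the set $\{\alpha,\beta\}$ is a base of $\mathcal X$. In particular $b(\mathcal X)\le 2$.
   Context: A coherent configuration on a finite set $\Omega$ is a pair $\mathcal X=(\Omega,S)$ where $S$ is a partition of $\Omega\times\Omega$ such that $1_\Omega$ is a union of elements of $S$, $s^*=\{(\beta,\alpha):(\alpha,\beta)\in s\}\in S$ for $s\in S$, and for $r,s,t\in S$ the number $|\{\gamma:(\alpha,\gamma)\in r,(\gamma,\beta)\in s\}|$ is independent of $(\alpha,\beta)\in t$. Relations are unions of elements of $S$; fibers are sets $\Gamma$ with $1_\Gamma\in S$. A relation $s$ is connected if it is symmetric ($s=s^*$) and any two distinct points of $\Omega$ are joined by a path in the graph $(\Omega,s)$. For $\gamma\in\Omega$, $\gamma s=\{\delta:(\gamma,\delta)\in s\}$. A fission of $\mathcal X$ is a coherent configuration on $\Omega$ whose relations include those of $\mathcal X$; complete means every basic relation is a singleton. $\mathcal X_\alpha$ is the smallest fission of $\mathcal X$ in which $\{\alpha\}$ is a fiber; $\alpha s$ is a union of fibers of $\mathcal X_\alpha$. For a union $\Gamma$ of fibers the restriction is $\mathcal X_\Gamma=(\Gamma,\{r\cap\Gamma^2:r\in S\}\setminus\{\emptyset\})$. A coherent configuration $(\Gamma,T)$ is semiregular if $|\{\delta:(\gamma,\delta)\in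 t\}|\le 1$ for all $\gamma\in\Gamma$, $t\in T$. A set $B$ is a base of $\mathcal X$ if the smallest fission in which all $\{\beta\}$, $\beta\in B$, are fibers is complete; $b(\mathcal X)$ is the minimal size of a base. *)

From mathcomp Require Import all_boot.
Set Implicit Arguments. Unset Strict Implicit. Unset Printing Implicit Defensive.

Section CC.
Variable T : finType.
Notation relT := {set T * T}.

Definition diag (G : {set T}) : relT := [set p | (p.1 \in G) && (p.1 == p.2)].

Definition transp (s : relT) : relT := [set p | (p.2, p.1) \in s].

(* r is a union of elements of S (S being a partition of Omega x Omega) *)
Definition is_rel (S : {set relT}) (r : relT) : Prop :=
  forall t, t \in S -> (t \subset r) \/ [disjoint t & r].

Definition coherent (S : {set relT}) : Prop :=
  [/\ partition S [set: T * T],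
      is_rel S (diag setT),
      (forall s, s \in S -> transp s \in S) &
      (forall r s t, r \in S -> s \in S -> t \in S ->
        forall a b a' b', (a, b) \in t -> (a', b') \in t ->
          #|[set g | ((a, g) \in r) && ((g, b) \in s)]|
          = #|[set g | ((a', g) \in r) && ((g, b') \in s)]|)].

Definition fiber (S : {set relT}) (G : {set T}) : Prop := diag G \in S.

Definition fission (S S' : {set relT}) : Prop :=
  coherent S' /\ forall r, is_rel S r -> is_rel S' r.

Definition complete (S : {set relT}) : Prop :=
  forall t, t \in S -> #|t| = 1.

Definition smallest_fission_fixing (S : {set relT}) (B : {set T})
    (S' : {set relT}) : Prop :=
  [/\ fission S S',
      (forall b, b \in B -> fiber S' [set b]) &
      (forall S'', fission S S'' -> (forall b, b \in B -> fiber S'' [set b]) ->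
         fission S' S'')].

Definition is_base (S : {set relT}) (B : {set T}) : Prop :=
  exists S', smallest_fission_fixing S B S' /\ complete S'.

Definition nbr (s : relT) (g : T) : {set T} := [set d | (g, d) \in s].

Definition restr (S : {set relT}) (G : {set T}) : {set relT} :=
  [set r :&: setX G G | r in S] :\ set0.

Definition semiregular (G : {set T}) (Ts : {set relT}) : Prop :=
  forall g t, g \in G -> t \in Ts -> #|nbr t g| <= 1.

Definition connected_rel (s : relT) : Prop :=
  s = transp s /\
  forall x y, x != y -> connect (fun u v => (u, v) \in s) x y.

End CC.

From mathcomp Require Import all_boot.
From Stdlib Require Import ClassicalDescription.
Set Implicit Arguments. Unset Strict Implicit. Unset Printing Implicit Defensive.

(* Fix a fission S2 of X in which two adjacent points a and b are fibers, and
   let c be another s-neighbour of a. Since {a} and {b} are fibers, the basic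
   relation of S2 through (c,c) only contains pairs (y1,y2) such that a sees
   y1, y2 along the same basic relation of S2 as c (hence y1, y2 lie in a s),
   and b does too. As S2 refines the smallest fission X_a, semiregularity of
   (X_a)_{a s} at b forces y1 = y2 = c, so {c} is a fiber of S2. Connectivity
   of s spreads this to all points, so every fission fixing a and b is
   discrete. *)

Definition asbool (Q : Prop) : bool :=
  if excluded_middle_informative Q then true else false.

Lemma asboolP (Q : Prop) : reflect Q (asbool Q).
Proof. by rewrite /asbool; case: excluded_middle_informative => h; constructor. Qed.

Section CoherentConfigurations.
Variable T : finType.
Local Notation relT := {set T * T}.

Lemma diag1 (x : T) : diag [set x] = [set (x, x)].
Proof.
apply/setP => -[y z]; rewrite !inE /=; apply/andP/eqP => [[/eqP -> /eqP <-] //|].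
by case=> -> ->; rewrite !eqxx.
Qed.

Section Relations.
Variable P : {set relT}.

Lemma sub_is_rel (r t : relT) q : is_rel P r -> t \in P -> q \in t -> q \in r -> t \subset r.
Proof. by move=> hr tP qt qr; case: (hr t tP) => // /disjointFr/(_ qt); rewrite qr. Qed.

Lemma is_rel_intro (r : relT) :
  (forall t q, t \in P -> q \in t -> q \in r -> t \subset r) -> is_rel P r.
Proof.
move=> h t tP; have [|/pred0Pn [q /andP [qt qr]]] := boolP [disjoint t & r].
  by right.
by left; apply: (h t q).
Qed.

Lemma partition_is_rel (r : relT) : partition P [set: T * T] -> r \in P -> is_rel P r.
Proof.
case/and3P => _ /trivIsetP tI _ rP t tP.
by have [->|ne] := eqVneq t r; [left | right; apply: tI].
Qed.

Lemma is_relT : is_rel P [set: T * T].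
Proof. by move=> t _; left; apply: subsetT. Qed.

Lemma is_relI (r1 r2 : relT) : is_rel P r1 -> is_rel P r2 -> is_rel P (r1 :&: r2).
Proof.
move=> h1 h2 t tP; case: (h1 t tP) => [s1|d1]; last first.
  by right; apply: disjointWr d1; apply: subsetIl.
case: (h2 t tP) => [s2|d2]; last by right; apply: disjointWr d2; apply: subsetIr.
by left; rewrite subsetI s1 s2.
Qed.

Lemma is_relC (r : relT) : is_rel P r -> is_rel P (~: r).
Proof.
move=> h t tP; case: (h t tP) => sub; last by left; rewrite -disjoints_subset.
by right; rewrite disjoints_subset setCK.
Qed.

Lemma is_rel_transp (r : relT) :
  (forall t, t \in P -> transp t \in P) -> is_rel P r -> is_rel P (transp r).
Proof.
move=> hP hr; apply: is_rel_intro => t [x y] tP xyt xyr.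
have /subsetP sub : transp t \subset r.
  apply: (sub_is_rel (q := (y, x)) hr (hP t tP)); first by rewrite inE.
  by move: xyr; rewrite inE.
by apply/subsetP => -[u v] uv; rewrite inE; apply: sub; rewrite inE.
Qed.

Lemma partition_indicator (r : relT) p : partition P [set: T * T] -> is_rel P r ->
  ((p \in r) : nat) = (\sum_(r' in P | r' \subset r) (p \in r'))%N.
Proof.
move=> hP hr; have /and3P [/eqP cov tI _] := hP.
have pcov : p \in cover P by rewrite cov inE.
have bP := pblock_mem pcov; have pb : p \in pblock P p by rewrite mem_pblock.
have inb r' : r' \in P -> p \in r' -> r' = pblock P p.
  by move=> r'P pr'; rewrite (def_pblock tI r'P pr').
case pr: (p \in r).
  rewrite (bigD1 (pblock P p)) /=; last by rewrite bP (sub_is_rel hr bP pb pr).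
  rewrite pb big1 // => r' /andP [/andP [r'P _] ne].
  by case pr': (p \in r') => //; rewrite (inb r' r'P pr') eqxx in ne.
rewrite big1 // => r' /andP [r'P sr].
by case pr': (p \in r') => //; rewrite (subsetP sr p pr') in pr.
Qed.

End Relations.

Definition inter_num (r s : relT) (a b : T) : nat :=
  #|[set g | ((a, g) \in r) && ((g, b) \in s)]|.

Lemma inter_numE (r s : relT) a b :
  inter_num r s a b = (\sum_g ((a, g) \in r) * ((g, b) \in s))%N.
Proof.
rewrite /inter_num -sum1_card big_mkcond; apply: eq_bigr => g _.
by rewrite inE mulnb; case: (_ && _).
Qed.

Definition inter_level (r s : relT) (k : nat) : relT :=
  [set p | inter_num r s p.1 p.2 == k].

Definition discrete : {set relT} := [set [set p] | p in [set: T * T]].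

Lemma is_rel_discrete (r : relT) : is_rel discrete r.
Proof. by apply: is_rel_intro => t q /imsetP [p _ ->] /set1P -> qr; rewrite sub1set. Qed.

Lemma discrete_coherent : coherent discrete.
Proof.
split.
- apply/and3P; split.
  + rewrite eqEsubset subsetT /=; apply/subsetP => p _.
    by apply/bigcupP; exists [set p]; [apply: imset_f | apply: set11].
  + apply/trivIsetP => _ _ /imsetP [p _ ->] /imsetP [q _ ->] ne.
    by rewrite disjoints1 inE; apply: contraNneq ne => ->.
  + by apply/imsetP => -[p _] e; have := set11 p; rewrite -e inE.
- exact: is_rel_discrete.
- move=> _ /imsetP [[x y] _ ->]; apply/imsetP; exists (y, x) => //.
  by apply/setP => -[u v]; rewrite !inE !xpair_eqE andbC.
- move=> r s _ _ _ /imsetP [p _ ->] a b a' b' /set1P e1 /set1P e2.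
  by rewrite -e1 in e2; case: e2 => -> ->.
Qed.

Section Coherent.
Variable P : {set relT}.
Hypothesis coP : coherent P.

Lemma coherent_partition : partition P [set: T * T].
Proof. by case: coP. Qed.

Lemma coherent_transp (t : relT) : t \in P -> transp t \in P.
Proof. by case: coP => _ _ hT _; apply: hT. Qed.

Lemma pblock_coherent p : pblock P p \in P.
Proof. by case/and3P: coherent_partition => /eqP cov _ _; rewrite pblock_mem ?cov. Qed.

Lemma mem_pblock_coherent p : p \in pblock P p.
Proof. by case/and3P: coherent_partition => /eqP cov _ _; rewrite mem_pblock cov. Qed.

Lemma inter_num_const (r s t : relT) a b a' b' : is_rel P r -> is_rel P s -> t \in P ->
  (a, b) \in t -> (a', b') \in t -> inter_num r s a b = inter_num r s a' b'.
Proof.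
case: coP => hP _ _ hc hr hs tP ab ab'.
have E x y : inter_num r s x y = (\sum_(r' in P | r' \subset r)
    \sum_(s' in P | s' \subset s) inter_num r' s' x y)%N.
  rewrite inter_numE (eq_bigr (fun g => \sum_(r' in P | r' \subset r)
      \sum_(s' in P | s' \subset s) (((x, g) \in r') * ((g, y) \in s'))%N)).
    rewrite exchange_big /=; apply: eq_bigr => r' _.
    by rewrite exchange_big /=; apply: eq_bigr => s' _; rewrite inter_numE.
  move=> g _; rewrite (partition_indicator (x, g) hP hr).
  rewrite (partition_indicator (g, y) hP hs) big_distrl /=.
  by apply: eq_bigr => r' _; rewrite big_distrr.
rewrite !E; apply: eq_bigr => r' /andP [r'P _]; apply: eq_bigr => s' /andP [s'P _].
exact: (hc r' s' t r'P s'P tP _ _ _ _ ab ab').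
Qed.

Lemma is_rel_inter_level (r s : relT) k : is_rel P r -> is_rel P s ->
  is_rel P (inter_level r s k).
Proof.
move=> hr hs; apply: is_rel_intro => t [a b] tP abt; rewrite inE => /eqP abk.
apply/subsetP => -[a' b'] abt'; rewrite inE /= -abk.
by rewrite (inter_num_const hr hs tP abt' abt).
Qed.

Lemma inter_num_transfer (r s t : relT) a b a' b' g : r \in P -> s \in P -> t \in P ->
  (a, b) \in t -> (a', b') \in t -> (a, g) \in r -> (g, b) \in s ->
  exists g', ((a', g') \in r) && ((g', b') \in s).
Proof.
move=> rP sP tP ab ab' ag gb.
have : 0 < inter_num r s a b by rewrite card_gt0; apply/set0Pn; exists g; rewrite inE ag.
rewrite (inter_num_const (partition_is_rel coherent_partition rP)
  (partition_is_rel coherent_partition sP) tP ab ab').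
by rewrite card_gt0 => /set0Pn [g']; rewrite inE; exists g'.
Qed.

Lemma fiber_fst (t : relT) x y x' y' : fiber P [set x] -> t \in P ->
  (x, y) \in t -> (x', y') \in t -> x' = x.
Proof.
move=> xP tP xy xy'; have xx : (x, x) \in diag [set x] by rewrite diag1 set11.
have [g] := inter_num_transfer xP tP tP xy xy' xx xy.
by rewrite diag1 => /andP [/set1P [] ->].
Qed.

Lemma fiber_snd (t : relT) x y x' y' : fiber P [set y] -> t \in P ->
  (x, y) \in t -> (x', y') \in t -> y' = y.
Proof.
move=> yP tP xy xy'.
by apply: (fiber_fst yP (coherent_transp tP)); rewrite inE; [apply: xy | apply: xy'].
Qed.

Lemma fiber_row (t u : relT) x y y1 y2 : fiber P [set x] -> t \in P -> u \in P ->
  (x, y) \in t -> (y, y) \in u -> (y1, y2) \in u -> ((x, y1) \in t) && ((x, y2) \in t).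
Proof.
move=> xP tP uP xy yy y12.
have yx : (y, x) \in transp t by rewrite inE.
have [g /andP [gy1 gy2]] := inter_num_transfer (coherent_transp tP) tP uP yy y12 yx xy.
move: gy1; rewrite inE /= => gy1.
by rewrite -(fiber_fst xP tP xy gy1) gy1.
Qed.

Lemma basic_singleton (t : relT) : (forall x, fiber P [set x]) -> t \in P ->
  exists p, t = [set p].
Proof.
move=> fix_all tP.
have [[x y] xy] : exists p, p \in t.
  case/and3P: coherent_partition => _ _ t0.
  by apply/set0Pn; apply: contraNneq t0 => <-.
exists (x, y); apply/eqP; rewrite eqEsubset sub1set xy andbT.
apply/subsetP => -[x' y'] h; apply/set1P.
by rewrite (fiber_fst (fix_all x) tP xy h) (fiber_snd (fix_all y) tP xy h).
Qed.

End Coherent.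

Lemma is_base_of_fixing_all (S : {set relT}) (B : {set T}) :
  (forall S2, fission S S2 -> (forall b, b \in B -> fiber S2 [set b]) ->
     forall x, fiber S2 [set x]) -> is_base S B.
Proof.
move=> fix_all; exists discrete; split; last first.
  by move=> _ /imsetP [p _ ->]; rewrite cards1.
split.
- by split; [apply: discrete_coherent | move=> r _; apply: is_rel_discrete].
- by move=> b _; rewrite /fiber diag1; apply: imset_f.
- move=> S2 f2 fixB; have co2 : coherent S2 by case: f2.
  split=> // r _; apply: is_rel_intro => t q tP qt qr.
  have [p tp] := basic_singleton co2 (fix_all S2 f2 fixB) tP.
  by move: qt qr; rewrite tp sub1set => /set1P ->.
Qed.

Section SmallestFission.
Variables (S : {set relT}) (B : {set T}).

Definition fixing_fission (S2 : {set relT}) : Prop :=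
  fission S S2 /\ forall b, b \in B -> fiber S2 [set b].

(* The relations shared by all fissions fixing B; its atoms are the basic
   relations of the smallest such fission. *)
Definition common_rel : {set relT} :=
  [set r | asbool (forall S2, fixing_fission S2 -> is_rel S2 r)].

Lemma common_relP r :
  reflect (forall S2, fixing_fission S2 -> is_rel S2 r) (r \in common_rel).
Proof. by rewrite inE; apply: asboolP. Qed.

Definition atom (p : T * T) : relT := \bigcap_(r in common_rel | p \in r) r.

Lemma atom_common p : atom p \in common_rel.
Proof.
apply/common_relP => S2 fixS2; apply: (big_ind (is_rel S2)).
- exact: is_relT.
- exact: is_relI.
- by move=> r /andP [/common_relP h _]; apply: h.
Qed.

Lemma mem_atom p : p \in atom p.
Proof. by apply/bigcapP => r /andP []. Qed.

Lemma atom_min p r : r \in common_rel -> p \in r -> atom p \subset r.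
Proof. by move=> rF pr; apply: bigcap_inf; rewrite rF pr. Qed.

Lemma common_relC r : r \in common_rel -> ~: r \in common_rel.
Proof. by move/common_relP => h; apply/common_relP => S2 /h; apply: is_relC. Qed.

Lemma common_rel_transp r : r \in common_rel -> transp r \in common_rel.
Proof.
move/common_relP => h; apply/common_relP => S2 fixS2.
by case: (fixS2) => [[co2 _] _]; apply: is_rel_transp (coherent_transp co2) (h _ fixS2).
Qed.

Lemma common_rel_inter_level r s k :
  r \in common_rel -> s \in common_rel -> inter_level r s k \in common_rel.
Proof.
move=> /common_relP hr /common_relP hs; apply/common_relP => S2 fixS2.
by case: (fixS2) => [[co2 _] _]; apply: is_rel_inter_level; [|apply: hr|apply: hs].
Qed.

Lemma common_rel_diag : diag [set: T] \in common_rel.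
Proof. by apply/common_relP => S2 [[[]]]. Qed.

Lemma common_rel_of r : is_rel S r -> r \in common_rel.
Proof. by move=> h; apply/common_relP => S2 [[_ fis] _]; apply: fis. Qed.

Lemma common_rel_fixed b : b \in B -> diag [set b] \in common_rel.
Proof.
move=> bB; apply/common_relP => S2 [[co2 _] fixB].
exact: partition_is_rel (coherent_partition co2) (fixB b bB).
Qed.

Lemma atom_eq p q : q \in atom p -> atom q = atom p.
Proof.
move=> qp; apply/eqP; rewrite eqEsubset atom_min ?atom_common //=.
have [pq|npq] := boolP (p \in atom q); first by rewrite atom_min ?atom_common.
have : atom p \subset ~: atom q by rewrite atom_min ?common_relC ?atom_common // inE.
by move/subsetP/(_ q qp); rewrite inE mem_atom.
Qed.

Lemma atom_transp p : atom (p.2, p.1) = transp (atom p).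
Proof.
have sub x y : atom (y, x) \subset transp (atom (x, y)).
  by rewrite atom_min ?common_rel_transp ?atom_common // inE mem_atom.
case: p => x y /=; apply/eqP; rewrite eqEsubset sub /=.
apply/subsetP => -[u v]; rewrite inE => /= vu.
by have := subsetP (sub y x) _ vu; rewrite inE.
Qed.

Definition closure : {set relT} := [set atom p | p in [set: T * T]].

Lemma is_rel_closure r : r \in common_rel -> is_rel closure r.
Proof.
move=> rF; apply: is_rel_intro => _ q /imsetP [p _ ->] qp qr.
by rewrite -(atom_eq qp) atom_min.
Qed.

Lemma closure_partition : partition closure [set: T * T].
Proof.
apply/and3P; split.
- rewrite eqEsubset subsetT /=; apply/subsetP => p _.
  by apply/bigcupP; exists (atom p); [apply: imset_f | apply: mem_atom].
- apply/trivIsetP => _ _ /imsetP [p _ ->] /imsetP [q _ ->] ne.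
  apply/pred0P => x /=; apply/andP => -[xp xq].
  by move: ne; rewrite -(atom_eq xp) -(atom_eq xq) eqxx.
- by apply/imsetP => -[p _] e; have := mem_atom p; rewrite -e inE.
Qed.

Lemma closure_coherent : coherent closure.
Proof.
split.
- exact: closure_partition.
- exact: is_rel_closure common_rel_diag.
- by move=> _ /imsetP [p _ ->]; rewrite -atom_transp imset_f.
- move=> _ _ _ /imsetP [p1 _ ->] /imsetP [p2 _ ->] /imsetP [p _ ->] a b a' b' ab ab'.
  pose k := inter_num (atom p1) (atom p2) a b.
  have : atom p \subset inter_level (atom p1) (atom p2) k.
    by rewrite -(atom_eq ab) atom_min ?common_rel_inter_level ?atom_common // inE.
  by move/subsetP/(_ _ ab'); rewrite inE => /eqP.
Qed.

Lemma closure_smallest : smallest_fission_fixing S B closure.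
Proof.
split.
- by split; [apply: closure_coherent | move=> r /common_rel_of/is_rel_closure].
- by move=> b bB; rewrite /fiber (_ : diag _ = atom (b, b)) ?imset_f //; apply/eqP;
    rewrite eqEsubset atom_min ?common_rel_fixed ?diag1 ?set11 ?sub1set ?mem_atom.
- move=> S2 f2 fixB; split; first by case: f2.
  move=> r hr; apply: is_rel_intro => t q tP qt qr.
  have aq : atom q \in closure by apply: imset_f.
  apply: subset_trans (sub_is_rel hr aq (mem_atom q) qr).
  by apply: sub_is_rel tP qt (mem_atom q); move/common_relP: (atom_common q); apply.
Qed.

End SmallestFission.

Lemma loopless_connected_card (s : relT) :
  connected_rel s -> (forall x y, (x, y) \in s -> x = y) -> #|T| <= 1.
Proof.
case=> _ conn loopless; apply/fintype_le1P => x y; apply/eqP; apply: contraT; rewrite eq_sym => ne.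
have cl : closed (fun u v => (u, v) \in s) (pred1 x).
  by move=> u v /loopless ->.
by have := closed_connect cl (conn x y ne); rewrite !inE eqxx eq_sym (negbTE ne).
Qed.

Section Propagation.
Variables (S : {set relT}) (s : relT).
Hypothesis s_rel : is_rel S s.
Hypothesis semireg : forall (a : T) (Sa : {set relT}),
  smallest_fission_fixing S [set a] Sa -> semiregular (nbr s a) (restr Sa (nbr s a)).

Lemma nbr_closure_unique a b z1 z2 r : (a, b) \in s -> (a, z1) \in s -> (a, z2) \in s ->
  r \in closure S [set a] -> (b, z1) \in r -> (b, z2) \in r -> z1 = z2.
Proof.
move=> ab az1 az2 rP bz1 bz2.
have rG : r :&: setX (nbr s a) (nbr s a) \in restr (closure S [set a]) (nbr s a).
  rewrite /restr in_setD1; apply/andP; split; last exact: imset_f.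
  by apply/set0Pn; exists (b, z1); rewrite !inE /= ab az1 bz1.
have bG : b \in nbr s a by rewrite inE.
move: (semireg (closure_smallest S [set a]) bG rG) => /card_le1_eqP; apply.
  by rewrite !inE /= ab az2 bz2.
by rewrite !inE /= ab az1 bz1.
Qed.

Lemma fiber_propagates S2 a b c : fission S S2 ->
  fiber S2 [set a] -> fiber S2 [set b] -> (a, b) \in s -> (a, c) \in s ->
  fiber S2 [set c].
Proof.
move=> f2 aP bP ab ac; have [co2 f2S] := f2.
have [[coa _] _ minimal] := closure_smallest S [set a].
have [_ f2a] : fission (closure S [set a]) S2 by apply: minimal => // x /set1P ->.
have blk := pblock_coherent co2; have inblk := mem_pblock_coherent co2.
set r := pblock (closure S [set a]) (b, c).
set t := pblock S2 (b, c); set v := pblock S2 (a, c); set u := pblock S2 (c, c).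
have tr : t \subset r.
  apply: (sub_is_rel _ (blk _) (inblk _) (mem_pblock_coherent coa _)).
  exact: f2a (partition_is_rel (coherent_partition coa) (pblock_coherent coa _)).
have vs : v \subset s by apply: sub_is_rel (f2S _ s_rel) (blk _) (inblk _) ac.
have cy y : (a, y) \in v -> (b, y) \in t -> c = y.
  move=> ay byt; apply: (nbr_closure_unique ab ac (subsetP vs _ ay)
    (pblock_coherent coa (b, c)) (mem_pblock_coherent coa _) (subsetP tr _ byt)).
rewrite /fiber (_ : diag [set c] = u) ?blk //.
apply/eqP; rewrite eqEsubset diag1 sub1set inblk /=.
apply/subsetP => -[y1 y2] yu; rewrite inE.
have /andP [by1 by2] := fiber_row co2 bP (blk (b, c)) (blk (c, c)) (inblk _) (inblk _) yu.
have /andP [ay1 ay2] := fiber_row co2 aP (blk (a, c)) (blk (c, c)) (inblk _) (inblk _) yu.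
by rewrite -(cy _ ay1 by1) -(cy _ ay2 by2).
Qed.

Lemma fibers_of_edge S2 a b : connected_rel s -> fission S S2 ->
  (a, b) \in s -> fiber S2 [set a] -> fiber S2 [set b] -> forall x, fiber S2 [set x].
Proof.
case=> s_sym conn f2 ab aP bP x.
have symm y z : (y, z) \in s -> (z, y) \in s by rewrite {2}s_sym inE.
pose fixed y := diag [set y] \in S2.
pose F := [pred y | fixed y && [exists z, fixed z && ((y, z) \in s)]].
have step y z : (y, z) \in s -> y \in F -> z \in F.
  move=> yz /andP [yP /existsP [w /andP [wP yw]]].
  have zP : fixed z by apply: fiber_propagates f2 yP wP yw yz.
  by apply/andP; split=> //; apply/existsP; exists y; rewrite yP symm.
have clF : closed (fun u v => (u, v) \in s) F.
  by move=> y z yz; apply/idP/idP; apply: step => //; apply: symm.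
have aF : a \in F by apply/andP; split=> //; apply/existsP; exists b; apply/andP.
have [<- //|ne] := eqVneq a x.
by move: aF; rewrite (closed_connect clF (conn a x ne)) => /andP [].
Qed.

Lemma edge_is_base a b : connected_rel s -> (a, b) \in s -> is_base S [set a; b].
Proof.
move=> conn ab; apply: is_base_of_fixing_all => S2 f2 fixab.
by apply: fibers_of_edge conn f2 ab _ _; apply: fixab; rewrite !inE eqxx ?orbT.
Qed.

End Propagation.

End CoherentConfigurations.

Theorem theorem3p3 (T : finType) (S : {set {set T * T}}) (s : {set T * T}) :
  coherent S ->
  is_rel S s ->
  connected_rel s ->
  (forall (a : T) (Sa : {set {set T * T}}),
      smallest_fission_fixing S [set a] Sa ->
      semiregular (nbr s a) (restr Sa (nbr s a))) ->
  (forall a b : T, (a, b) \in s -> a != b -> is_base S [set a; b])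
  /\ (exists B : {set T}, is_base S B /\ #|B| <= 2).
Proof.
move=> _ s_rel conn semireg.
have edge_base a b : (a, b) \in s -> is_base S [set a; b].
  by move=> ab; exact: (edge_is_base s_rel semireg conn ab).
split=> [a b ab _|]; first exact: edge_base.
case: (pickP (fun p : T * T => (p \in s) && (p.1 != p.2))) => [[a b] /andP [ab _]|loopless].
  by exists [set a; b]; split; [apply: edge_base | rewrite cards2; case: (a != b)].
exists [set: T]; split; first by apply: is_base_of_fixing_all => S2 _ fixT x; apply: fixT.
rewrite cardsT (leq_trans (loopless_connected_card conn _)) // => x y xy.
by apply/eqP; move: (loopless (x, y)); rewrite /= xy => /negbFE.
Qed.
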